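(* Let $X$ be a locally K-elastic Polish space without isolated points, let $\Gamma$ be the group of self-homeomorphisms $h$ of $X$ for which $\{x\in X:h(x)\neq x\}$ has compact closure (the same conclusion holds for the group of all self-homeomorphisms), acting by application, and let $I$ be the ideal of nowhere dense subsets of $X$. Then Player II has a winning strategy in the DC game for $\Gamma\curvearrowright X, I$.
   Context: A Polish space $X$ is K-elastic if it is locally compact and for every nonempty open set $O\subseteq X$ with compact closure and every compact $K\subseteq X$ there is a self-homeomorphism $h$ of $X$ with $K\subseteq h[O]$ and such that $\{x\in X: h(x)\neq x\}$ has compact closure. $X$ is locally K-elastic if it has a basis of open sets each of which (as a subspace) is K-elastic. The DC game for a group $\Gamma$ acting on $X$ and an invariant ideal $I$: players I and II alternate for $\omega$ rounds; at round $n$ Player I plays $a_n\in I$ and Player II answers with $\gamma_n\in\Gamma$, subject to $\gamma_0=1$ and $\gamma_n$ fixes every element of $\bigcup_{m<n}\gamma_m\cdot a_m$ (where $\gamma\cdot a=\{\gamma\cdot x:x\in a\}$). Player II wins if $\bigcup_{n}\gamma_n\cdot a_n\in I$. *)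

From HB Require Import structures.
From mathcomp Require Import all_boot all_order all_algebra.
From mathcomp Require Import all_classical all_reals all_analysis.
From mathcomp Require Import Rstruct Rstruct_topology.

Set Implicit Arguments. Unset Strict Implicit. Unset Printing Implicit Defensive.
Import Order.TTheory GRing.Theory Num.Theory.
Local Open Scope classical_set_scope.
Local Open Scope ring_scope.

Section Defs.
Variable T : topologicalType.

Definition metric_compatible (d : T -> T -> Rdefinitions.R) : Prop :=
  forall A : set T, open A <->
    (forall x, A x -> exists e : Rdefinitions.R, 0 < e /\ [set y | d x y < e] `<=` A).

Definition metric_complete (d : T -> T -> Rdefinitions.R) : Prop :=
  forall u : nat -> T,
    (forall e : Rdefinitions.R, 0 < e -> exists N, forall m n, (N <= m)%N -> (N <= n)%N ->
        d (u m) (u n) < e) ->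
    exists x : T, u @ \oo --> x.

Definition complete_compatible_metric (d : T -> T -> Rdefinitions.R) : Prop :=
  (forall x y, 0 <= d x y) /\
  (forall x y, d x y = 0 <-> x = y) /\
  (forall x y, d x y = d y x) /\
  (forall x y z, d x z <= d x y + d y z) /\
  metric_compatible d /\ metric_complete d.

Definition polish : Prop :=
  (exists D : set T, countable D /\ dense D) /\
  (exists d : T -> T -> Rdefinitions.R, complete_compatible_metric d).

Definition no_isolated_points : Prop := forall x : T, ~ open [set x].

Definition nowhere_dense (A : set T) : Prop := (closure A)° = set0.

Definition locally_compact_on (U : set T) : Prop :=
  forall x, U x -> exists C : set T, [/\ compact C, C `<=` U & nbhs x C].

(** h is a self-homeomorphism of the subspace U (values outside U irrelevant). *)
Definition homeo_on (U : set T) (h : T -> T) : Prop :=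
  exists g : T -> T,
    [/\ (forall x, U x -> U (h x)), (forall x, U x -> U (g x)),
        (forall x, U x -> g (h x) = x), (forall x, U x -> h (g x) = x) &
        ({within U, continuous h} /\ {within U, continuous g})].

Definition supp_on (U : set T) (h : T -> T) : set T := [set x | U x /\ h x <> x].

(** The closure in the subspace U of a set S ⊆ U is [closure S `&` U]. *)
Definition K_elastic_on (U : set T) : Prop :=
  locally_compact_on U /\
  forall O : set T, open O -> O `<=` U -> O !=set0 -> compact (closure O `&` U) ->
  forall K : set T, K `<=` U -> compact K ->
  exists h : T -> T, [/\ homeo_on U h, K `<=` h @` O &
                        compact (closure (supp_on U h) `&` U)].

Definition locally_K_elastic : Prop :=
  exists B : set (set T),
    (forall U, B U -> open U /\ K_elastic_on U) /\
    (forall x (V : set T), open V -> V x -> exists U, [/\ B U, U x & U `<=` V]).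

Definition Gamma (h : T -> T) : Prop :=
  homeo_on setT h /\ compact (closure [set x | h x <> x]).

(** A strategy for Player II maps the list [a_0; ...; a_n] of
    Player I's moves so far to Player II's answer gamma_n. *)
Definition II_strategy := seq (set T) -> (T -> T).

Definition history (a : nat -> set T) (n : nat) : seq (set T) := mkseq a n.+1.

Definition winning_II (sigma : II_strategy) : Prop :=
  forall a : nat -> set T, (forall n, nowhere_dense (a n)) ->
  let gamma := fun n => sigma (history a n) in
  [/\ (forall n, Gamma (gamma n)),
      gamma 0%N = id,
      (forall n m, (m < n)%N -> forall y, (gamma m @` a m) y -> gamma n y = y) &
      nowhere_dense (\bigcup_n (gamma n @` a n))].

End Defs.

From mathcomp Require Import all_boot all_order all_algebra.
From mathcomp Require Import all_classical all_reals all_analysis.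
From mathcomp Require Import Rstruct Rstruct_topology lra.

(* Player II keeps finitely many pairwise disjoint K-elastic open regions, each with
   a compact core, all disjoint from the union P of the sets gamma_m a_m played so far.
   Against a nowhere dense move a, inside each region N one picks a small basic open
   set M missing the closure of a and, by K-elasticity, a homeomorphism h supported
   in N whose image h[M] covers the core; composing these maps (their supports are
   disjoint) gives gamma, which fixes P, and the shrunk regions h[M] miss gamma a.
   Then the k-th member V_k of a countable pi-base receives a small open witness
   inside V_k, placed in the core of a region meeting V_k or of a new region inside
   V_k away from the closure of P. Since no later move enters a core, the final union
   misses every witness, hence is nowhere dense. *)

Set Implicit Arguments. Unset Strict Implicit. Unset Printing Implicit Defensive.
Import Order.TTheory GRing.Theory Num.Theory.
Local Open Scope classical_set_scope.
Local Open Scope ring_scope.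

Definition pi_base (T : topologicalType) (V : nat -> set T) : Prop :=
  (forall k, open (V k)) /\
  (forall G, open G -> G !=set0 -> exists k, V k !=set0 /\ V k `<=` G).

Section Metric.
Variables (T : topologicalType) (d : T -> T -> Rdefinitions.R).
Hypothesis hd : complete_compatible_metric d.

Let d_xx x : d x x = 0. Proof. by case: hd => _ [/(_ x x) [_ ->]]. Qed.
Let d_sym x y : d x y = d y x. Proof. by case: hd => _ [_ []]. Qed.
Let d_tri x y z : d x z <= d x y + d y z. Proof. by case: hd => _ [_ [_ []]]. Qed.
Let d_compat : metric_compatible d. Proof. by case: hd => _ [_ [_ [_ []]]]. Qed.

Lemma open_dball x e : open [set y | d x y < e].
Proof.
apply/d_compat => y /= dxy; exists (e - d x y); split; first by rewrite subr_gt0.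
by move=> z /= dyz; have := d_tri x y z; lra.
Qed.

Lemma dball_nbhs x e : 0 < e -> nbhs x [set y | d x y < e].
Proof. by move=> e0; apply: open_nbhs_nbhs; split; [exact: open_dball | rewrite /= d_xx]. Qed.

Lemma nbhs_dball x A : nbhs x A -> exists2 e, 0 < e & [set y | d x y < e] `<=` A.
Proof.
rewrite nbhsE => -[W [oW Wx] WA].
have [e [e0 eW]] := (d_compat W).1 oW x Wx.
by exists e => //; move=> y /eW /WA.
Qed.

Lemma closed_dcball x e : closed [set y | d x y <= e].
Proof.
have -> : [set y | d x y <= e] = ~` [set y | e < d x y].
  by apply/seteqP; split => y /=; [move=> ? ?; lra | rewrite leNgt => /negP].
apply: open_closedC; apply/d_compat => y /= dxy; exists (d x y - e).
split => [|z /= dyz]; first by rewrite subr_gt0.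
by have := d_tri x z y; rewrite (d_sym z y); lra.
Qed.

Lemma metric_hausdorff : hausdorff_space T.
Proof.
move=> p q pq; apply: contrapT => npq.
have dpq : 0 < d p q.
  case: hd => d_ge0 [/(_ p q) [d_eq0 _] _].
  by rewrite lt_neqAle d_ge0 andbT eq_sym; apply/eqP => /d_eq0.
have e0 : 0 < d p q / 2 by rewrite divr_gt0.
have [z [/= pz qz]] := pq _ _ (dball_nbhs p e0) (dball_nbhs q e0).
by have := d_tri p z q; rewrite (d_sym z q); lra.
Qed.

Lemma dense_countable_pi_base (D : set T) : countable D -> dense D ->
  exists V : nat -> set T, pi_base V.
Proof.
move=> /countable_injP [f finj] Ddense.
(* As f is injective on D, the union below has at most one member; it spares
   choosing a preimage of i. *)
pose V k := if (unpickle k : option (nat * nat)) is Some (i, n) then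
  \bigcup_(x in [set x | D x /\ f x = i]) [set y | d x y < n.+1%:R^-1] else set0.
exists V; split => [k|G oG [y Gy]].
  rewrite /V; case: (unpickle k) => [[i n]|]; last exact: open0.
  by apply: bigcup_open => x _; exact: open_dball.
have [e [e0 eG]] := (d_compat G).1 oG y Gy.
have e20 : 0 < e / 2 by rewrite divr_gt0.
have [x [/= dyx Dx]] : ([set z | d y z < e / 2] `&` D) !=set0.
  by apply: Ddense; [exists y; rewrite /= d_xx | exact: open_dball].
have [N _ /(_ N (leqnn N)) /= Ne] := near_infty_natSinv_lt (PosNum e20).
exists (pickle (f x, N)); rewrite /V pickleK; split.
  by exists x; exists x => //=; rewrite d_xx invr_gt0 ltr0n.
move=> z [x' [Dx' fx'x]] /=; have -> : x' = x by apply: finj; rewrite ?inE.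
move=> dxz; apply: eG => /=; apply: (le_lt_trans (d_tri y x z)).
by rewrite [e]splitr ltrD // (lt_trans dxz).
Qed.

End Metric.

Lemma closure_minimal (T : topologicalType) (A F : set T) :
  closed F -> A `<=` F -> closure A `<=` F.
Proof. by rewrite closureE; exact: smallest_sub. Qed.

Lemma closure_map (T U : topologicalType) (p : T -> U) (A : set T) (B : set U) x :
  {for x, continuous p} -> p @` A `<=` B -> closure A x -> closure B (p x).
Proof.
move=> px AB clAx W /px /clAx [z [Az Wpz]].
by exists (p z); split => //; apply: AB; exists z.
Qed.

Section NowhereDense.
Variable T : topologicalType.

Lemma open_sub_closure_meet (W A : set T) :
  open W -> W !=set0 -> W `<=` closure A -> W `&` A !=set0.
Proof.
move=> oW [w Ww] /(_ w Ww) /(_ W (open_nbhs_nbhs (conj oW Ww))) [z [Az Wz]].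
by exists z.
Qed.

Lemma nowhere_dense_avoid (A N : set T) : nowhere_dense A -> open N -> N !=set0 ->
  exists2 y, N y & ~ closure A y.
Proof.
move=> ndA oN [x Nx]; apply: contrapT => noy.
suff : (closure A)° x by rewrite ndA.
apply: filterS (open_nbhs_nbhs (conj oN Nx)) => y Ny.
by apply: contrapT => nAy; apply: noy; exists y.
Qed.

Lemma nowhere_denseU (A B : set T) :
  nowhere_dense A -> nowhere_dense B -> nowhere_dense (A `|` B).
Proof.
rewrite /nowhere_dense closureU => ndA ndB; apply/seteqP; split => x // /[dup].
rewrite {1}/interior nbhsE => -[W [oW Wx] WAB] _.
have WA : W `<=` closure A.
  move=> y Wy; apply: contrapT => nAy.
  have : (closure B)° y.
    apply: (@filterS _ _ _ (W `&` ~` closure A)); last first.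
      apply: open_nbhs_nbhs; split => //; apply: openI => //.
      by apply: closed_openC; exact: closed_closure.
    by move=> z [/WAB [] // ? ?].
  by rewrite ndB.
suff : (closure A)° x by rewrite ndA.
exact: filterS WA (open_nbhs_nbhs (conj oW Wx)).
Qed.

Lemma nowhere_dense_image (f g : T -> T) (A : set T) :
  cancel f g -> cancel g f -> continuous f -> continuous g ->
  nowhere_dense A -> nowhere_dense (f @` A).
Proof.
move=> fK gK cf cg ndA; apply/seteqP; split => x // clfAx.
suff : (closure A)° (g x) by rewrite ndA.
have : nbhs (g x) (f @^-1` closure (f @` A)) by apply: cf; rewrite gK.
apply: filterS => y /= /(closure_map (cg (f y))); rewrite fK; apply.
by move=> _ [_ [z Az <-] <-]; rewrite fK.
Qed.

End NowhereDense.

Lemma compact_image_continuous (T U : topologicalType) (f : T -> U) (A : set T) :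
  continuous f -> compact A -> compact (f @` A).
Proof. by move=> cf; apply: continuous_compact; apply: continuous_subspaceT. Qed.

Section Homeomorphism.
Variables (T : topologicalType) (f g : T -> T).
Hypotheses (fK : cancel f g) (gK : cancel g f) (cf : continuous f) (cg : continuous g).

Lemma image_homeo_preimage (A : set T) : f @` A = g @^-1` A.
Proof.
apply/seteqP; split => [_ [x Ax <-]|x Agx]; first by rewrite /= fK.
by exists (g x); rewrite ?gK.
Qed.

Lemma image_homeoK (A : set T) : g @` (f @` A) = A.
Proof.
apply/seteqP; split => [_ [_ [x Ax <-] <-]|x Ax]; first by rewrite fK.
by exists (f x); [exists x | rewrite fK].
Qed.

Lemma open_image_homeo (A : set T) : open A -> open (f @` A).
Proof. by rewrite image_homeo_preimage; move: A; apply/continuousP. Qed.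

Lemma image_homeo_setI (A B : set T) : f @` (A `&` B) = f @` A `&` f @` B.
Proof. by rewrite !image_homeo_preimage preimage_setI. Qed.

Lemma closure_image_homeo (A : set T) : closure (f @` A) = f @` closure A.
Proof.
apply/seteqP; split => [y clfAy|_ [x clAx <-]].
  exists (g y); last by rewrite gK.
  apply: (closure_map (@cg y) _ clfAy).
  by move=> _ [_ [x Ax <-] <-]; rewrite fK.
by apply: closure_map clAx => //; apply: cf.
Qed.

End Homeomorphism.

Section KElasticImage.
Variables (T : topologicalType) (f g : T -> T).
Hypotheses (fK : cancel f g) (gK : cancel g f) (cf : continuous f) (cg : continuous g).

Lemma locally_compact_on_image (U : set T) :
  locally_compact_on U -> locally_compact_on (f @` U).
Proof.
move=> lcU _ [x Ux <-]; have [C [cC CU nC]] := lcU x Ux.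
exists (f @` C); split; [exact: compact_image_continuous | exact: image_subset |].
by rewrite (image_homeo_preimage fK gK); apply: (@cg (f x)); rewrite fK.
Qed.

Lemma homeo_on_image (U : set T) (h : T -> T) :
  open U -> homeo_on U h -> homeo_on (f @` U) (f \o h \o g).
Proof.
move=> oU [h' [hU h'U h'K hK' [ch ch']]].
have oV : open (f @` U) by exact: open_image_homeo.
rewrite (image_homeo_preimage fK gK) in oV *.
exists (f \o h' \o g); split => [x Ux|x Ux|x Ux|x Ux|] /=; rewrite ?fK.
- exact: hU.
- exact: h'U.
- by rewrite h'K.
- by rewrite hK'.
move: ch ch'; rewrite !continuous_open_subspace // => ch ch'.
split => x /[!inE] Ux; apply: continuous_comp (@cg x) _;
  apply: continuous_comp _ (@cf _).
- by apply: ch; rewrite inE.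
- by apply: ch'; rewrite inE.
Qed.

Lemma supp_on_image (U : set T) (h : T -> T) :
  supp_on (f @` U) (f \o h \o g) = f @` supp_on U h.
Proof.
rewrite !(image_homeo_preimage fK gK); apply/seteqP.
split => x [Ux hx]; split => // e; apply: hx.
  by rewrite /= e gK.
by rewrite -[in RHS]e /= fK.
Qed.

Lemma K_elastic_image (U : set T) : open U -> K_elastic_on U -> K_elastic_on (f @` U).
Proof.
move=> oU [lcU elU]; split; first exact: locally_compact_on_image.
move=> Q oQ QU [q Qq] cQ K KU cK.
have gQU : g @` Q `<=` U.
  by rewrite -[U](image_homeoK fK); apply: image_subset.
have cgQ : compact (closure (g @` Q) `&` U).
  rewrite -[U](image_homeoK fK) (closure_image_homeo gK fK cg cf).
  by rewrite -(image_homeo_setI gK fK); exact: compact_image_continuous.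
have gKU : g @` K `<=` U by rewrite -[U](image_homeoK fK); apply: image_subset.
have [h [hh KhgQ cS]] := elU _ (open_image_homeo gK fK cf oQ) gQU
  (ex_intro _ (g q) (ex_intro2 _ _ q Qq erefl)) cgQ _ gKU (compact_image_continuous cg cK).
exists (f \o h \o g); split; first exact: homeo_on_image.
  move=> k Kk; have [_ [q' Qq' <-] e] := KhgQ (g k) (ex_intro2 _ _ k Kk erefl).
  by exists q' => //=; rewrite e gK.
rewrite supp_on_image (closure_image_homeo fK gK cf cg) -(image_homeo_setI fK gK).
exact: compact_image_continuous.
Qed.

End KElasticImage.

Lemma continuous_near_eq (T U : topologicalType) (f g : T -> U) x :
  {near x, g =1 f} -> {for x, continuous g} -> {for x, continuous f}.
Proof.
move=> gf cg; apply: cvg_trans (near_eq_cvg gf) _.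
by rewrite -(nbhs_singleton gf).
Qed.

Lemma Gamma_homeo (T : topologicalType) (h : T -> T) : Gamma h ->
  exists g, [/\ cancel h g, cancel g h, continuous h & continuous g].
Proof.
move=> [[g [_ _ hK gK [ch cg]]] _]; exists g.
split=> [x|x||].
- exact: hK.
- exact: gK.
- exact/continuous_subspace_setT.
- exact/continuous_subspace_setT.
Qed.

Lemma Gamma_id (T : topologicalType) : Gamma (@id T).
Proof.
split; first by exists id; split => //; split;
  apply: (continuous_subspace_setT _).1 => x; exact: cvg_id.
have -> : [set x : T | id x <> x] = set0 by apply/seteqP; split.
by rewrite closure0; exact: compact0.
Qed.

Section GammaHausdorff.
Variables (T : topologicalType) (hT : hausdorff_space T).

Lemma Gamma_comp (f h : T -> T) : Gamma f -> Gamma h -> Gamma (f \o h).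
Proof.
move=> Gf Gh; have [f' [fK f'K cf cf']] := Gamma_homeo Gf.
have [h' [hK h'K ch ch']] := Gamma_homeo Gh.
split.
  exists (h' \o f'); split => [//|//|x _|x _|] /=; first by rewrite fK hK.
    by rewrite h'K f'K.
  by split; apply: (continuous_subspace_setT _).1 => x;
    apply: continuous_comp; by [apply: ch | apply: cf | apply: cf' | apply: ch'].
have cU := compactU Gh.2 Gf.2.
apply: (subclosed_compact _ cU); first exact: closed_closure.
apply: closure_minimal; first exact: compact_closed cU.
move=> x /= fhx; have [hx|hx] := pselect (h x = x).
  by right; apply: subset_closure; rewrite /= -{1}hx.
by left; apply: subset_closure.
Qed.

Definition extend_id (N : set T) (h : T -> T) (x : T) : T := if x \in N then h x else x.

Lemma extend_id_in (N : set T) (h : T -> T) x : N x -> extend_id N h x = h x.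
Proof. by move=> Nx; rewrite /extend_id mem_set. Qed.

Lemma extend_id_out (N : set T) (h : T -> T) x : ~ N x -> extend_id N h x = x.
Proof. by move=> Nx; rewrite /extend_id memNset. Qed.

Lemma continuous_extend_id (N S : set T) (k : T -> T) :
  open N -> closed S -> S `<=` N -> (forall x, N x -> ~ S x -> k x = x) ->
  {in N, continuous k} -> continuous (extend_id N k).
Proof.
move=> oN cS SN kS ck x; have [Nx|Nx] := pselect (N x).
  apply: (@continuous_near_eq _ _ _ k); last by apply: ck; rewrite inE.
  by apply: filterS (open_nbhs_nbhs (conj oN Nx)) => z Nz; rewrite extend_id_in.
apply: (@continuous_near_eq _ _ _ id); last exact: cvg_id.
have nSx : (~` S) x by move/SN.
apply: filterS (open_nbhs_nbhs (conj (closed_openC cS) nSx)) => z /= nSz.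
by have [Nz|Nz] := pselect (N z); [rewrite extend_id_in // kS | rewrite extend_id_out].
Qed.

Lemma closure_supp_on_sub (N : set T) (h : T -> T) :
  compact (closure (supp_on N h) `&` N) -> closure (supp_on N h) `<=` N.
Proof.
move=> cS x clx; suff : (closure (supp_on N h) `&` N) x by case.
apply: closure_minimal clx; first exact: compact_closed.
by move=> y [Ny hy]; split => //; apply: subset_closure.
Qed.

Lemma Gamma_extend_id (N : set T) (h : T -> T) : open N -> homeo_on N h ->
  compact (closure (supp_on N h) `&` N) -> Gamma (extend_id N h).
Proof.
move=> oN [g [hN gN hK gK [ch cg]]] cS.
have SN := closure_supp_on_sub cS.
rewrite setIidl // in cS.
have clS : closed (closure (supp_on N h)) by exact: closed_closure.
have hS x : N x -> ~ closure (supp_on N h) x -> h x = x.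
  by move=> Nx nSx; apply: contrapT => hx; apply/nSx/subset_closure.
have gS x : N x -> ~ closure (supp_on N h) x -> g x = x.
  by move=> Nx nSx; rewrite -[in LHS](hS x) ?hK.
move: ch cg; rewrite !continuous_open_subspace // => ch cg.
split.
  exists (extend_id N g); split => [x _|x _|x _|x _|].
  - by [].
  - by [].
  - have [Nx|Nx] := pselect (N x); last by rewrite !extend_id_out.
    by rewrite !extend_id_in ?hK //; exact: hN.
  - have [Nx|Nx] := pselect (N x); last by rewrite !extend_id_out.
    by rewrite !extend_id_in ?gK //; exact: gN.
  by split; apply: (continuous_subspace_setT _).1; exact: continuous_extend_id clS SN _ _.
apply: (subclosed_compact _ cS); first exact: closed_closure.
apply: closure_minimal => // x /= hx; have [Nx|Nx] := pselect (N x).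
  by apply/subset_closure; split => //; rewrite -(extend_id_in h Nx).
by exfalso; apply: hx; rewrite extend_id_out.
Qed.

End GammaHausdorff.

Fixpoint compn (T : Type) (f : nat -> T -> T) (n : nat) : T -> T :=
  if n is m.+1 then f m \o compn f m else id.

Section DisjointSupports.
Variables (T : topologicalType) (hT : hausdorff_space T).
Variables (N : nat -> set T) (f : nat -> T -> T) (n : nat).
Hypotheses (Gf : forall i, (i < n)%N -> Gamma (f i))
  (f_out : forall i x, (i < n)%N -> ~ N i x -> f i x = x)
  (f_in : forall i x, (i < n)%N -> N i x -> N i (f i x))
  (N_disj : forall i j, (i < n)%N -> (j < n)%N -> i != j -> N i `&` N j = set0).

Lemma compn_disjoint_supports :
  [/\ Gamma (compn f n),
      (forall x, (forall i, (i < n)%N -> ~ N i x) -> compn f n x = x) &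
      (forall i x, (i < n)%N -> N i x -> compn f n x = f i x)].
Proof.
suff : forall m, (m <= n)%N -> [/\ Gamma (compn f m),
    (forall x, (forall i, (i < m)%N -> ~ N i x) -> compn f m x = x) &
    (forall i x, (i < m)%N -> N i x -> compn f m x = f i x)] by apply.
have N_out i j x : (i < n)%N -> (j < n)%N -> i != j -> N i x -> ~ N j x.
  by move=> ? ? ij Nix Njx; have : (N i `&` N j) x by []; rewrite N_disj.
elim => [_|m IH mn]; first by split => //; exact: Gamma_id.
have [Gm out_m in_m] := IH (ltnW mn).
split => [|x xout|i x].
- exact: Gamma_comp (Gf mn) Gm.
- rewrite /= out_m; first by apply: f_out mn _; apply: xout.
  by move=> i im; apply: xout; apply: ltnW.
rewrite ltnS leq_eqVlt => /orP [/eqP -> Nmx|im Nix] /=.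
  by rewrite out_m // => j jm; exact: N_out _ _ _ mn (ltn_trans jm mn) (negbT (gtn_eqF jm)) Nmx.
have iltn := ltn_trans im mn.
have Nfix : ~ N m (f i x) := N_out _ _ _ iltn mn (negbT (ltn_eqF im)) (f_in iltn Nix).
by rewrite (in_m i) // f_out.
Qed.

End DisjointSupports.

Section Game.
Variables (T : topologicalType) (d : T -> T -> Rdefinitions.R).
Hypothesis hd : complete_compatible_metric d.
Variable B : set (set T).
Hypothesis B_elastic : forall U, B U -> open U /\ K_elastic_on U.
Hypothesis B_base : forall x (G : set T), open G -> G x -> exists U, [/\ B U, U x & U `<=` G].

Let hT := metric_hausdorff hd.

Lemma basic_open_compact_closure (G : set T) y : open G -> G y ->
  exists M, [/\ B M, M y, compact (closure M) & closure M `<=` G].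
Proof.
move=> oG Gy; have [E [BE Ey EG]] := B_base oG Gy.
have [C [cC CE nC]] := (B_elastic BE).2.1 y Ey.
have [e e0 eC] := nbhs_dball hd nC.
have e20 : 0 < e / 2 by rewrite divr_gt0.
have [M [BM My Me]] := B_base (open_dball hd y (e / 2)) (nbhs_singleton (dball_nbhs hd y e20)).
have Mball : closure M `<=` [set z | d y z <= e / 2].
  by apply: closure_minimal; [exact: closed_dcball | move=> z /Me /ltW].
have MC : closure M `<=` C by move=> z /Mball /= dz; apply: eC => /=; lra.
exists M; split => //; last by move=> z /MC /CE /EG.
by apply: (subclosed_compact _ cC MC); exact: closed_closure.
Qed.

Definition shrinking (N C a : set T) (gm : T -> T) (N' : set T) : Prop :=
  [/\ Gamma gm, (forall x, ~ N x -> gm x = x), (forall x, N x -> N (gm x)),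
      [/\ N' `<=` N, open N', K_elastic_on N' & C `<=` N'] &
      (forall x, a x -> N x -> ~ N' (gm x))].

Lemma shrink_region (N C a : set T) : open N -> K_elastic_on N -> compact C -> C `<=` N ->
  nowhere_dense a -> exists gm N', shrinking N C a gm N'.
Proof.
move=> oN eN cC CN nda.
have [[y Ny]|N0] := pselect (N !=set0); last first.
  exists id, N; split => //; [exact: Gamma_id | by split | ].
  by move=> x _ Nx _; apply: N0; exists x.
have [y' Ny' nay'] := nowhere_dense_avoid nda oN (ex_intro _ y Ny).
have oG : open (N `&` ~` closure a) by apply: openI => //; exact/closed_openC/closed_closure.
have [M [BM My' cM MG]] := basic_open_compact_closure oG (conj Ny' nay').
have MN : M `<=` N by move=> z /(@subset_closure _ M) /MG [].
have cMN : compact (closure M `&` N) by rewrite setIidl // => z /MG [].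
have [h [hh CM cS]] := eN.2 M (B_elastic BM).1 MN (ex_intro _ y' My') cMN C CN cC.
have hN x : N x -> N (h x) by case: hh => g [+ _ _ _ _]; apply.
have Gh := Gamma_extend_id hT oN hh cS.
have [g [hK gK ch cg]] := Gamma_homeo Gh.
exists (extend_id N h), (extend_id N h @` M); split => //.
- by move=> x Nx; rewrite extend_id_out.
- by move=> x Nx; rewrite extend_id_in //; apply: hN.
- split.
  + by move=> _ [m /MN Nm <-]; rewrite extend_id_in //; apply: hN.
  + exact: open_image_homeo hK gK cg _ (B_elastic BM).1.
  + exact: K_elastic_image hK gK ch cg _ (B_elastic BM).1 (B_elastic BM).2.
  + by move=> c /CM [m Mm <-]; exists m => //; rewrite extend_id_in //; apply: MN.
- move=> x ax Nx [m Mm /(can_inj hK) mx]; subst m.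
  by have [_] := MG x (subset_closure Mm); apply; exact: subset_closure.
Qed.

Variable V : nat -> set T.
Hypothesis V_pi_base : pi_base V.

(* Regions stay disjoint from [played], and a witness lies in a core, so no later
   move meets it. *)
Record position := Position {
  nregions : nat; region : nat -> set T; core : nat -> set T;
  played : set T; witness : nat -> set T }.

Definition region_ok (p : position) (i : nat) : Prop :=
  [/\ open (region p i), K_elastic_on (region p i), compact (core p i),
      core p i `<=` region p i & region p i `&` played p = set0].

Definition witnessed (p : position) (j : nat) : Prop :=
  [/\ open (witness p j), witness p j `<=` V j &
      (V j !=set0 -> witness p j !=set0 /\
                     exists2 i, (i < nregions p)%N & witness p j `<=` core p i)].

Definition invariant (k : nat) (p : position) : Prop :=
  [/\ forall i, (i < nregions p)%N -> region_ok p i,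
      forall i j, (i < nregions p)%N -> (j < nregions p)%N -> i != j ->
        region p i `&` region p j = set0,
      nowhere_dense (played p) &
      forall j, (j < k)%N -> witnessed p j].

Lemma witnessed_mono (p p' : position) (j : nat) :
  witness p' j = witness p j -> (nregions p <= nregions p')%N ->
  (forall i, (i < nregions p)%N -> core p i `<=` core p' i) ->
  witnessed p j -> witnessed p' j.
Proof.
move=> Wj np cp; rewrite /witnessed Wj => -[oW WV Wcore].
split => // /Wcore [W0 [i ip Wi]]; split => //.
by exists i; [exact: leq_trans np | exact: subset_trans (cp i ip)].
Qed.

Definition witness_added (k : nat) (p p' : position) : Prop :=
  [/\ played p' = played p, (forall j, (j < k)%N -> witness p' j = witness p j) &
      invariant k.+1 p'].

Lemma witness_added_empty k p : invariant k p -> ~ (V k !=set0) ->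
  exists p', witness_added k p p'.
Proof.
move=> [regs disj nd wit] Vk0.
exists (Position (nregions p) (region p) (core p) (played p) [eta witness p with k |-> set0]).
split => //= [j jk|]; first by rewrite (ltn_eqF jk).
split => // j; rewrite ltnS leq_eqVlt => /orP [/eqP ->|jk].
  by split => //=; rewrite eqxx //; exact: open0.
by apply: (witnessed_mono _ _ _ (wit j jk)) => //= [|i _ //]; rewrite (ltn_eqF jk).
Qed.

Lemma witness_added_old k p i : invariant k p -> (i < nregions p)%N ->
  V k `&` region p i !=set0 -> exists p', witness_added k p p'.
Proof.
move=> [regs disj nd wit] ip [y Vky].
have [oN eN cC CN Nplayed] := regs i ip.
have [M [BM My cM MVN]] := basic_open_compact_closure (openI (V_pi_base.1 k) oN) Vky.
exists (Position (nregions p) (region p) [eta core p with i |-> core p i `|` closure M]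
  (played p) [eta witness p with k |-> M]).
split => //= [j jk|]; first by rewrite (ltn_eqF jk).
split => //= [j jp|j].
  rewrite /region_ok /=; have [->|ji] := eqVneq j i; last exact: regs.
  by split => //; [exact: compactU | move=> z [/CN|/MVN []]].
rewrite ltnS leq_eqVlt => /orP [/eqP ->|jk].
  rewrite /witnessed /= !eqxx; split => //; first exact: (B_elastic BM).1.
    by move=> z /(@subset_closure _ M) /MVN [].
  move=> _; split; first by exists y.
  by exists i => //=; rewrite eqxx => z Mz; right; exact: subset_closure.
apply: (witnessed_mono _ _ _ (wit j jk)) => //= [|i' _]; first by rewrite (ltn_eqF jk).
by case: eqP => [->|_]; [exact: subsetUl | exact: subset_refl].
Qed.

Lemma witness_added_new k p : invariant k p -> V k !=set0 ->
  (forall i, (i < nregions p)%N -> V k `&` region p i = set0) ->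
  exists p', witness_added k p p'.
Proof.
move=> [regs disj nd wit] Vk0 Vk_regions.
have [y Vky nPy] := nowhere_dense_avoid nd (V_pi_base.1 k) Vk0.
have oG : open (V k `&` ~` closure (played p)).
  by apply: openI; [exact: V_pi_base.1 | exact/closed_openC/closed_closure].
have [E [BE Ey EG]] := B_base oG (conj Vky nPy).
have [oE eE] := B_elastic BE.
have [M [BM My cM ME]] := basic_open_compact_closure oE Ey.
have Eplayed : E `&` played p = set0.
  by apply/seteqP; split => // z [/EG [_ nz] Pz]; apply/nz/subset_closure.
have Eregion j : (j < nregions p)%N -> E `&` region p j = set0.
  by move=> jp; apply/seteqP; split => // z [/EG [Vz _] Nz]; rewrite -(Vk_regions j jp).
exists (Position (nregions p).+1 [eta region p with nregions p |-> E]
  [eta core p with nregions p |-> closure M] (played p) [eta witness p with k |-> M]).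
split => //= [j jk|]; first by rewrite (ltn_eqF jk).
split => //= [j|i j|j].
- rewrite ltnS leq_eqVlt => /orP [/eqP ->|jp]; first by rewrite /region_ok /= eqxx.
  by rewrite /region_ok /= (ltn_eqF jp); exact: regs.
- rewrite ltnS leq_eqVlt => /orP [/eqP ->|ip];
    rewrite ltnS leq_eqVlt => /orP [/eqP ->|jp] ij /=.
  + by rewrite eqxx in ij.
  + by rewrite eqxx (ltn_eqF jp) Eregion.
  + by rewrite eqxx (ltn_eqF ip) setIC Eregion.
  + by rewrite (ltn_eqF ip) (ltn_eqF jp) disj.
rewrite ltnS leq_eqVlt => /orP [/eqP ->|jk].
  rewrite /witnessed /= !eqxx; split => //; first exact: (B_elastic BM).1.
    by move=> z /(@subset_closure _ M) /ME /EG [].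
  move=> _; split; first by exists y.
  by exists (nregions p) => //=; rewrite eqxx; exact: subset_closure.
apply: (witnessed_mono _ _ _ (wit j jk)) => //= [|i ip]; first by rewrite (ltn_eqF jk).
by rewrite (ltn_eqF ip).
Qed.

Lemma witness_added_exists k p : invariant k p -> exists p', witness_added k p p'.
Proof.
move=> inv; have [Vk0|Vk0] := pselect (V k !=set0); last exact: witness_added_empty.
have [[i [ip Vki]]|Vk_regions] :=
  pselect (exists i, (i < nregions p)%N /\ V k `&` region p i !=set0).
  exact: witness_added_old inv ip Vki.
apply: witness_added_new => // i ip; apply/seteqP; split => // z Vkz.
by apply: Vk_regions; exists i; split => //; exists z.
Qed.

Lemma shrink_disjoint_regions (N C : nat -> set T) (n : nat) (a : set T) :
  (forall i, (i < n)%N -> [/\ open (N i), K_elastic_on (N i), compact (C i) & C i `<=` N i]) ->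
  (forall i j, (i < n)%N -> (j < n)%N -> i != j -> N i `&` N j = set0) ->
  nowhere_dense a ->
  exists gm N', [/\ Gamma gm, (forall x, (forall i, (i < n)%N -> ~ N i x) -> gm x = x),
    ((n = 0)%N -> gm = id),
    (forall i, (i < n)%N ->
       [/\ N' i `<=` N i, open (N' i), K_elastic_on (N' i) & C i `<=` N' i]) &
    (forall i, (i < n)%N -> N' i `&` gm @` a = set0)].
Proof.
move=> regs disj nda.
have /choice [F FP] : forall i, exists r : (T -> T) * set T,
    (i < n)%N -> shrinking (N i) (C i) a r.1 r.2.
  move=> i; have [ip|_] := boolP (i < n)%N; last by exists (id, set0).
  have [oN eN cC CN] := regs i ip.
  by have [gm [N' ?]] := shrink_region oN eN cC CN nda; exists (gm, N') => _.
pose f i := (F i).1.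
have [Gg g_out g_in] : [/\ Gamma (compn f n),
    forall x, (forall i, (i < n)%N -> ~ N i x) -> compn f n x = x &
    forall i x, (i < n)%N -> N i x -> compn f n x = f i x].
  apply: compn_disjoint_supports => //.
  - by move=> i ip; have [] := FP i ip.
  - by move=> i x ip; have [_ + _ _ _] := FP i ip; apply.
  - by move=> i x ip; have [_ _ + _ _] := FP i ip; apply.
exists (compn f n), (fun i => (F i).2); split => // [->//|i ip|i ip].
  by have [_ _ _ ? _] := FP i ip.
have [_ _ _ [N'N _ _ _] N'a] := FP i ip.
apply/seteqP; split => // z [N'z [x ax xz]].
have [[j [jp Njx]]|xout] := pselect (exists j, (j < n)%N /\ N j x); last first.
  rewrite g_out in xz; last by move=> j jp Njx; apply: xout; exists j.
  by apply: xout; exists i; split => //; rewrite xz; apply: N'N.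
rewrite (g_in j) // /f in xz.
have [ij|ij] := eqVneq i j; first by subst j; apply: (N'a x ax Njx); rewrite xz.
have [_ _ fj_in _ _] := FP j jp.
by rewrite -(disj i j ip jp ij); split; [apply: N'N | rewrite -xz; apply: fj_in].
Qed.

Lemma shrink_regions k p a : invariant k p -> nowhere_dense a ->
  exists gm p1, [/\ Gamma gm, (forall y, played p y -> gm y = y),
    ((nregions p = 0)%N -> gm = id), played p1 = played p `|` gm @` a &
    witness p1 = witness p /\ invariant k p1].
Proof.
move=> [regs disj nd wit] nda.
have [|gm [N' [Ggm gm_out gm0 N'_ok N'_avoid]]] :=
    @shrink_disjoint_regions (region p) (core p) _ a _ disj nda.
  by move=> i /regs [].
have N'_played i : (i < nregions p)%N -> N' i `&` played p = set0.
  move=> ip; have [_ _ _ _ Nplayed] := regs i ip; have [N'N _ _ _] := N'_ok i ip.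
  by apply: subsetI_eq0 Nplayed.
have [g [gmK gK cgm cg]] := Gamma_homeo Ggm.
exists gm, (Position (nregions p) N' (core p) (played p `|` gm @` a) (witness p)).
split => //.
  move=> y Py; apply: gm_out => i ip Niy; have [_ _ _ _ Nplayed] := regs i ip.
  by have : (region p i `&` played p) y by []; rewrite Nplayed.
split => //; split => //=.
- move=> i ip; have [_ _ cC _ _] := regs i ip; have [_ oN' eN' CN'] := N'_ok i ip.
  by split => //; rewrite setIUr N'_played // N'_avoid // setU0.
- move=> i j ip jp ij; have [N'iN _ _ _] := N'_ok i ip; have [N'jN _ _ _] := N'_ok j jp.
  exact: subsetI_eq0 N'iN N'jN (disj i j ip jp ij).
- by apply: nowhere_denseU => //; exact: (nowhere_dense_image gmK gK cgm cg).
Qed.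

Definition step_spec (k : nat) (p : position) (a : set T) (r : (T -> T) * position) :=
  invariant k p -> nowhere_dense a ->
  [/\ Gamma r.1, (forall y, played p y -> r.1 y = y), ((nregions p = 0)%N -> r.1 = id),
      played r.2 = played p `|` r.1 @` a &
      (forall j, (j < k)%N -> witness r.2 j = witness p j) /\ invariant k.+1 r.2].

Lemma step_exists k p a : exists r, step_spec k p a r.
Proof.
have [[inv nda]|] := pselect (invariant k p /\ nowhere_dense a); last first.
  by move=> h; exists (id, p) => inv nda; exfalso; apply: h.
have [gm [p1 [Ggm gm_played gm0 played1 [witness1 inv1]]]] := shrink_regions inv nda.
have [p' [played' witness' inv']] := witness_added_exists inv1.
exists (gm, p') => _ _ /=; split => //; first by rewrite played'.
by split => // j jk; rewrite witness' // witness1.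
Qed.

Definition init_position : position :=
  Position 0 (fun _ => set0) (fun _ => set0) set0 (fun _ => set0).

Lemma invariant_init : invariant 0 init_position.
Proof. by split => //; rewrite /nowhere_dense /= closure0 interior0. Qed.

Fixpoint run (step : nat * position * set T -> (T -> T) * position)
    (a : nat -> set T) (n : nat) : position :=
  if n is m.+1 then (step (m, run step a m, a m)).2 else init_position.

Lemma eq_run step a b n : (forall i, (i < n)%N -> a i = b i) -> run step a n = run step b n.
Proof.
elim: n => //= n IH ab; rewrite IH ?ab // => i lt; apply: ab; exact: ltnW.
Qed.

Section Run.
Variable step : nat * position * set T -> (T -> T) * position.
Hypothesis step_ok : forall k p a, step_spec k p a (step (k, p, a)).
Variable a : nat -> set T.
Hypothesis nda : forall n, nowhere_dense (a n).

Let pos n := run step a n.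
Let gam n := (step (n, pos n, a n)).1.

Lemma invariant_run n : invariant n (pos n).
Proof.
elim: n => [|n IH]; first exact: invariant_init.
by have [_ _ _ _ []] := step_ok IH (nda n).
Qed.

Let step_run n := step_ok (invariant_run n) (nda n).

Lemma played_run m n : (m < n)%N -> gam m @` a m `<=` played (pos n).
Proof.
elim: n => // n IH; have [_ _ _ played_n _] := step_run n.
rewrite ltnS leq_eqVlt => /orP [/eqP ->|mn] /=; rewrite played_n.
  exact: subsetUr.
exact: subset_trans (IH mn) (@subsetUl _ _ _).
Qed.

Lemma witness_run j n : (j < n)%N -> witness (pos n) j = witness (pos j.+1) j.
Proof.
elim: n => // n IH; rewrite ltnS leq_eqVlt => /orP [/eqP ->|jn] //.
by have [_ _ _ _ [witness_n _]] := step_run n; rewrite /= witness_n // IH.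
Qed.

Lemma nowhere_dense_run : nowhere_dense (\bigcup_n (gam n @` a n)).
Proof.
set U := \bigcup_n (gam n @` a n); apply/seteqP; split => x // Ux.
have [k [Vk0 VkU]] := V_pi_base.2 _ (@open_interior _ (closure U)) (ex_intro _ x Ux).
have [_ _ _ /(_ k (ltnSn k)) [oW WV /(_ Vk0) [W0 _]]] := invariant_run k.+1.
have [w [Ww [m _ gma_w]]] : witness (pos k.+1) k `&` U !=set0.
  apply: open_sub_closure_meet => // z /WV /VkU; exact: interior_subset.
pose n := maxn k.+1 m.+1.
have kn : (k < n)%N by rewrite leq_max ltnSn.
have mn : (m < n)%N by rewrite leq_max ltnSn orbT.
have [regs _ _ wit] := invariant_run n.
have [_ _ /(_ Vk0) [_ [i ip Wi]]] := wit k kn.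
have [_ _ _ CN Nplayed] := regs i ip.
have : (region (pos n) i `&` played (pos n)) w.
  by split; [apply/CN/Wi; rewrite witness_run | exact: played_run mn _ gma_w].
by rewrite Nplayed.
Qed.

Lemma run_rules : [/\ forall n, Gamma (gam n), gam 0%N = id &
  forall n m, (m < n)%N -> forall y, (gam m @` a m) y -> gam n y = y].
Proof.
split => [n|//|n m mn y /(played_run mn) Py].
- by have [] := step_run n.
- by have [_ _ gm0 _ _] := step_run 0; exact: gm0.
- by have [_ gm_played _ _ _] := step_run n; exact: gm_played.
Qed.

End Run.

Lemma winning_strategy_exists : exists sigma : II_strategy T, winning_II sigma.
Proof.
have [step step_ok] := choice (fun q : nat * position * set T => step_exists q.1.1 q.1.2 q.2).
(* The history of Player I's moves determines the whole run, so sigma replays it. *)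
pose sigma (l : seq (set T)) :=
  let n := (size l).-1 in (step (n, run step (nth set0 l) n, nth set0 l n)).1.
exists sigma => a nda.
have sigmaE n : sigma (history a n) = (step (n, run step a n, a n)).1.
  rewrite /sigma /history size_mkseq /= nth_mkseq // (@eq_run step _ a) // => i lt.
  by rewrite nth_mkseq // ltnW.
have [Gg g0 gfix] := run_rules (fun k p b => step_ok (k, p, b)) nda.
split => [n|||]; rewrite ?sigmaE //.
- by move=> n m mn y; rewrite !sigmaE; exact: gfix.
- have -> : \bigcup_n [set sigma (history a n) x | x in a n] =
            \bigcup_n [set (step (n, run step a n, a n)).1 x | x in a n].
    by apply: eq_bigcupr => n _; rewrite sigmaE.
  exact: (nowhere_dense_run (fun k p b => step_ok (k, p, b)) nda).
Qed.

End Game.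

Theorem mainTheorem8 (T : topologicalType) :
  polish T -> no_isolated_points T -> locally_K_elastic T ->
  exists sigma : II_strategy T, winning_II sigma.
Proof.
move=> [[D [cD dD]] [d hd]] _ [B [B_elastic B_base]].
have [V V_pi_base] := dense_countable_pi_base hd cD dD.
exact: (winning_strategy_exists hd B_elastic B_base V_pi_base).
Qed.
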